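(* If $\mu$ is an edge probability measure, then \[ 2\sum_{e\in\operatorname{supp}\mu}\mu(e)^2+\beta(\mu;P_3)\le 2, \] with equality if and only if $|\operatorname{supp}\mu|=1$.
   Context: $P_3$ is the path on 3 vertices. An edge probability measure is a probability measure $\mu$ on the edge set $E(K)$ of some finite complete graph $K$; $\operatorname{supp}\mu$ is the set of edges of positive mass. For a subgraph $H'\subseteq K$, $\mu(H')=\prod_{e\in E(H')}\mu(e)$, and $\beta(\mu;H)=\sum_{H'}\mu(H')$, the sum over all subgraphs $H'$ of $K$ isomorphic to $H$. *)

From mathcomp Require Import all_boot all_order all_algebra.
Set Implicit Arguments. Unset Strict Implicit. Unset Printing Implicit Defensive.
Import Order.TTheory GRing.Theory Num.Theory.
Local Open Scope ring_scope.

(* The complete graph K on the finite vertex type T: its edges are the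
   2-element subsets of T. *)
Definition edges (T : finType) : {set {set T}} := [set e : {set T} | #|e| == 2%N].

Section EdgeMeasure.
Variables (R : realFieldType) (T : finType).

(* An edge probability measure: mu is nonnegative on E(K) and sums to 1 over
   E(K). Values of mu outside E(K) are irrelevant (never used). *)
Definition edge_prob_measure (mu : {set T} -> R) : Prop :=
  (forall e, e \in edges T -> 0 <= mu e) /\ \sum_(e in edges T) mu e = 1.

Definition supp (mu : {set T} -> R) : {set {set T}} :=
  [set e in edges T | 0 < mu e].

(* Copies of P_3 in K, identified with their edge sets: two distinct edges
   of K sharing a vertex (a subgraph of K isomorphic to P_3 is determined by
   its edge set, as P_3 has no isolated vertices). *)
Definition P3_copies : {set {set {set T}}} :=
  [set S : {set {set T}} | [&& S \subset edges T, #|S| == 2%N &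
     [forall e in S, forall f in S, (e != f) ==> (e :&: f != set0)]]].

Definition mu_sub (mu : {set T} -> R) (S : {set {set T}}) : R :=
  \prod_(e in S) mu e.

Definition beta_P3 (mu : {set T} -> R) : R :=
  \sum_(S in P3_copies) mu_sub mu S.
End EdgeMeasure.

From mathcomp Require Import all_boot all_order all_algebra.
From mathcomp Require Import lra.
Set Implicit Arguments. Unset Strict Implicit. Unset Printing Implicit Defensive.
Import Order.TTheory GRing.Theory Num.Theory.
Local Open Scope ring_scope.

(* Write s for the sum of mu(e)^2 and c for the sum of mu(e) mu(f) over ordered
   pairs of distinct edges, so that s + c = (sum of mu)^2 = 1.  A copy of P_3 is
   an unordered pair of distinct edges, hence contributes twice to c: 2 beta <= c.
   Thus 2 s + beta <= 2 - 2 c + c / 2 <= 2, with equality iff c = 0, i.e. iff at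
   most one edge has positive mass; since mu sums to 1, exactly one does. *)

Section CrossSum.
Variables (R : realFieldType) (I : finType) (A : {set I}) (x : I -> R).

Definition cross_sum : R := \sum_(p in setX A A | p.1 != p.2) x p.1 * x p.2.

Lemma sqr_sum_cross : (\sum_(i in A) x i) ^+ 2 = \sum_(i in A) x i ^+ 2 + cross_sum.
Proof.
rewrite expr2 mulr_suml.
under eq_bigr => i iA do rewrite mulr_sumr (bigD1 i) //=.
(* [congr] closes the diagonal part: [x i ^+ 2] unfolds to [x i * x i]. *)
rewrite big_split /=; congr (_ + _).
rewrite /cross_sum pair_big_dep /=; apply: eq_bigl => -[i j] /=.
by rewrite in_setX eq_sym andbA.
Qed.

Hypothesis x_ge0 : forall i, i \in A -> 0 <= x i.

Lemma cross_term_ge0 (p : I * I) :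
  (p \in setX A A) && (p.1 != p.2) -> 0 <= x p.1 * x p.2.
Proof.
by case: p => i j; rewrite in_setX => /andP[/andP[iA jA] _]; rewrite mulr_ge0 ?x_ge0.
Qed.

Lemma cross_sum_ge0 : 0 <= cross_sum.
Proof. exact: sumr_ge0 cross_term_ge0. Qed.

Lemma sum_pos_part (f : R -> R) : f 0 = 0 ->
  \sum_(i in [set i in A | 0 < x i]) f (x i) = \sum_(i in A) f (x i).
Proof.
move=> f0; rewrite [RHS](bigID (fun i => 0 < x i)) /= [X in _ = _ + X]big1 ?addr0.
  by apply: eq_bigl => i; rewrite inE.
move=> i /andP[iA]; rewrite -leNgt => xi_le0.
suff -> : x i = 0 by [].
by apply/eqP; rewrite eq_le xi_le0 x_ge0.
Qed.

Lemma card_pos_part_eq1 : \sum_(i in A) x i = 1 ->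
  #|[set i in A | 0 < x i]| = 1%N <-> cross_sum = 0.
Proof.
move=> sum1; have := sqr_sum_cross; rewrite sum1 expr1n => sqr_sum.
split.
  move=> /eqP/cards1P[a pos_a].
  have := sum_pos_part (f := id) erefl.
  have := sum_pos_part (f := fun t => t ^+ 2) (expr0n _ 2).
  rewrite pos_a !big_set1 sum1 => sq_a xa1.
  by move: sqr_sum; rewrite -sq_a xa1 expr1n; lra.
move=> cross0; apply/eqP; rewrite eqn_leq; apply/andP; split.
  apply/card_le1_eqP => a b; rewrite !inE => /andP[aA a_gt0] /andP[bA b_gt0].
  apply/eqP; apply: contraT => ba.
  have := psumr_eq0P cross_term_ge0 cross0 (i := (b, a)).
  by rewrite in_setX aA bA ba => /(_ isT)/eqP; rewrite mulf_eq0 !gt_eqF.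
rewrite card_gt0; apply: contra_eqN sum1 => /eqP pos0.
by rewrite -(sum_pos_part (f := id) erefl) pos0 big_set0 eq_sym oner_eq0.
Qed.

End CrossSum.

Lemma sum_pairs_set2 (R : realFieldType) (I : finType) (A : {set I})
    (F : I * I -> R) (a b : I) :
  a \in A -> b \in A -> a != b ->
  \sum_(p in setX A A | (p.1 != p.2) && ([set p.1; p.2] == [set a; b])) F p
    = F (a, b) + F (b, a).
Proof.
move=> aA bA ab; rewrite (eq_bigl (mem [set (a, b); (b, a)])); last first.
  move=> -[i j] /=; rewrite in_setX !inE.
  apply/idP/idP => [/andP[/andP[iA jA] /andP[ij /eqP ij_ab]] | ].
    move: ij; have := set21 i j; have := set22 i j; rewrite ij_ab.
    by move=> /set2P[]-> /set2P[]->; rewrite ?eqxx ?orbT.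
  by case/orP=> /eqP[-> ->]; rewrite aA bA ?eqxx ?ab // eq_sym ab setUC eqxx.
by rewrite big_setU1 ?big_set1 // inE xpair_eqE negb_and ab.
Qed.

Section P3Copies.
Variables (R : realFieldType) (T : finType) (mu : {set T} -> R).
Hypothesis mu_ge0 : forall e, e \in edges T -> 0 <= mu e.

Lemma beta_P3_ge0 : 0 <= beta_P3 mu.
Proof.
apply: sumr_ge0 => S; rewrite inE => /andP[SE _].
by apply: prodr_ge0 => e eS; apply/mu_ge0/(subsetP SE).
Qed.

Lemma beta_P3_le_cross_sum : 2 * beta_P3 mu <= cross_sum (edges T) mu.
Proof.
rewrite /cross_sum (partition_big (fun p => [set p.1; p.2]) predT) //=.
rewrite (bigID (mem (P3_copies T))) /= -[X in X <= _]addr0 /beta_P3 mulr_sumr.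
apply: lerD; last first.
  apply/sumr_ge0 => S _; apply/sumr_ge0 => p /andP[+ _].
  exact: (cross_term_ge0 mu_ge0).
apply: ler_sum => S; rewrite inE => /and3P[SE /cards2P[a [b [ab S_ab]]] _].
move: SE; rewrite {}S_ab => SE.
have aE : a \in edges T by apply: (subsetP SE); rewrite set21.
have bE : b \in edges T by apply: (subsetP SE); rewrite set22.
rewrite (eq_bigl _ _ (fun p => esym (andbA _ _ _))) sum_pairs_set2 //=.
by rewrite /mu_sub big_setU1 ?big_set1 ?inE //= (mulrC (mu b)) mulr_natl mulr2n.
Qed.

End P3Copies.

Theorem proposition4p1 (R : realFieldType) (T : finType) (mu : {set T} -> R) :
  edge_prob_measure mu ->
  2 * (\sum_(e in supp mu) mu e ^+ 2) + beta_P3 mu <= 2 /\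
  (2 * (\sum_(e in supp mu) mu e ^+ 2) + beta_P3 mu = 2 <-> #|supp mu| = 1%N).
Proof.
case=> mu_ge0 mu_sum1.
have sqr_supp := sum_pos_part (f := fun t => t ^+ 2) mu_ge0 (expr0n _ 2).
have := sqr_sum_cross (edges T) mu; rewrite mu_sum1 expr1n => sqr_sum.
have cross_ge0 := cross_sum_ge0 mu_ge0.
have beta_ge0 := beta_P3_ge0 mu_ge0.
have beta_le := beta_P3_le_cross_sum mu_ge0.
rewrite sqr_supp (card_pos_part_eq1 mu_ge0 mu_sum1).
by split; [lra | split=> ?; lra].
Qed.
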